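(* Let $k\geq 3$ and let $b_1,\dots,b_k$ be free generators of $\Lambda=\mathbb F_k$. Then there is $C>0$ such that for every large enough prime $p$ with $p\equiv 1\pmod 3$ there exist an onto homomorphism $\rho_p:\Lambda\rightarrow G_p$ and a set $T_p\subset G_p$ satisfying $\frac{1}{243}\leq\frac{|T_p|}{|G_p|}\leq\frac13$ and $|T_p\rho_p(b_j)\triangle T_p|\leq \frac{C}{\sqrt p}|G_p|$ for every $1\leq j\leq k$. Moreover, these can be chosen so that for every $h\in\Lambda\setminus\{e\}$ we have $\rho_p(h)\neq e$ for every large enough $p$.
   Context: $F_q$ is the field with $q$ elements. For a prime $p\equiv1\pmod 3$: $H_p=\mathrm{PSL}_2(F_p)$ acts on $\mathrm{P}^1(F_p)=F_p\cup\{\infty\}$ by linear fractional transformations, hence on $F_3^{p+1}\cong F_3^{\mathrm{P}^1(F_p)}$ by permuting coordinates ($g\cdot x=(x_{g^{-1}\cdot i})_i$); $A_p=\{(x_i)\in F_3^{p+1}\mid\sum_i x_i=0\}$ is an $H_p$-invariant subspace and $G_p=A_p\rtimes H_p$. $\triangle$ denotes symmetric difference. *)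

From mathcomp Require Import all_boot all_order all_algebra all_fingroup all_field.
From mathcomp Require Import algC.
Set Implicit Arguments. Unset Strict Implicit. Unset Printing Implicit Defensive.
Import GRing.Theory Num.Theory.
Local Open Scope ring_scope.

(* The projective line P^1(F_p) = F_p ∪ {∞}; None stands for ∞. *)
Definition P1 (p : nat) := option 'F_p.

Definition lft (p : nat) (a b c d : 'F_p) (z : P1 p) : P1 p :=
  match z with
  | Some x => if c * x + d == 0 then None else Some ((a * x + b) / (c * x + d))
  | None => if c == 0 then None else Some (a / c)
  end.

(* H_p = PSL_2(F_p), realised as the (faithful) image of SL_2(F_p) in Sym(P^1(F_p)). *)
Definition Hp (p : nat) : {set {perm P1 p}} :=
  [set s : {perm P1 p} | [exists a : 'F_p, [exists b : 'F_p, [exists c : 'F_p,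
     [exists d : 'F_p, (a * d - b * c == 1) && [forall z, s z == lft a b c d z]]]]]].

(* G_p = A_p ⋊ H_p, realised faithfully inside the wreath product F_3 ≀ Sym(P^1):
   the pair (x, s) with x ∈ A_p (sum-zero vector in F_3^{P^1}) and s ∈ H_p is the
   permutation (i, c) |-> (s i, c + x (s i)) of P^1(F_p) × F_3.  These permutations
   form a group isomorphic to A_p ⋊ H_p (translations = A_p, normal; the s with
   x = 0 form a complement acting on A_p by permuting coordinates). *)
Definition Gp (p : nat) : {set {perm (P1 p * 'F_3)}} :=
  [set g : {perm (P1 p * 'F_3)} | [exists s in Hp p, exists x : {ffun P1 p -> 'F_3},
     (\sum_i x i == 0) && [forall ic : P1 p * 'F_3,
        g ic == (s ic.1, ic.2 + x (s ic.1))]]].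

(* Elements of the free group F_k on generators b_0..b_{k-1}: reduced words.
   A letter (j, false) is b_j, (j, true) is b_j^{-1}. *)
Definition letter (k : nat) := ('I_k * bool)%type.

Fixpoint reduced (k : nat) (w : seq (letter k)) : bool :=
  match w with
  | x :: ((y :: _) as w') => ~~ ((x.1 == y.1) && (x.2 != y.2)) && reduced w'
  | _ => true
  end.

Definition eval_word (gT : finGroupType) (k : nat) (g : 'I_k -> gT)
    (w : seq (letter k)) : gT :=
  (\prod_(x <- w) (if x.2 then (g x.1)^-1 else g x.1))%g.

Definition symdiff (T : finType) (A B : {set T}) : {set T} := (A :\: B) :|: (B :\: A).

(* The generator b_j is sent to the pair (y_j, M_j) of A_p ⋊ H_p, where
   M_j = E21(2j) E12(±2) E21(-2j) is an integer matrix reduced mod p and y_j is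
   δ_0 - δ_∞ for j = 2 and 0 otherwise.  For p odd, E12(2) = M_0 and its
   conjugate M_1 generate SL_2(F_p), and conjugating δ_0 - δ_∞ by the
   2-transitive group H_p gives all δ_i - δ_j, which span A_p: so ρ_p is onto.
   The M_j generate a free subgroup of SL_2(Z) by ping-pong on the cones
   |b| < |a| of the second column, so the matrix of a nontrivial reduced word
   has a nonzero (0,1) entry; once p exceeds it, the word moves the point 0 of
   P^1(F_p), hence ρ_p(h) ≠ e.
   T_p is the set of g whose image of (∞, 0) has F_3-coordinate 1.  G_p acts
   transitively on P^1(F_p) × F_3, so all fibres of g ↦ g(∞, 0) have the same
   size |G_p| / 3(p+1); hence |T_p| = |G_p| / 3.  An element g lies in just
   one of T_p ρ_p(b_j) and T_p only if y_j does not vanish at the first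
   coordinate of g(∞, 0), i.e. only if g(∞, 0) lies over 0 or ∞; so
   |T_p ρ_p(b_j) △ T_p| ≤ 2 |G_p| / (p+1) ≤ 2 |G_p| / √p. *)

From mathcomp Require Import all_boot all_order all_algebra all_fingroup all_field.
From mathcomp Require Import algC ring zify.
Set Implicit Arguments. Unset Strict Implicit. Unset Printing Implicit Defensive.
Import Order.TTheory GRing.Theory Num.Theory.
Local Open Scope ring_scope.

Section Matrix22.
Variable R : comNzRingType.

Definition mx22 (a b c d : R) : 'M[R]_2 :=
  \matrix_(i, j) if i == 0 then (if j == 0 then a else b) else (if j == 0 then c else d).

Lemma mx22E (M : 'M[R]_2) : M = mx22 (M 0 0) (M 0 1) (M 1 0) (M 1 1).
Proof.
apply/matrixP => i j; rewrite mxE.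
by case: i => [[|[|]]] //= ?; case: j => [[|[|]]] //= ?; congr (M _ _); apply: val_inj.
Qed.

Lemma mulmx22 a b c d a' b' c' d' :
  mx22 a b c d *m mx22 a' b' c' d' =
  mx22 (a * a' + b * c') (a * b' + b * d') (c * a' + d * c') (c * b' + d * d').
Proof.
apply/matrixP => i j; rewrite !mxE !big_ord_recr big_ord0 /= !mxE add0r.
by case: i => [[|[|]]] //= ?; case: j => [[|[|]]] //= ?.
Qed.

Lemma det_mx22 a b c d : \det (mx22 a b c d) = a * d - b * c.
Proof.
rewrite (expand_det_row _ 0) !big_ord_recr big_ord0 /= add0r !mxE /=.
by rewrite /cofactor !det_mx11 !mxE /=; ring.
Qed.

Lemma mx22_1 : mx22 1 0 0 1 = 1%:M.
Proof. by apply/matrixP => i j; rewrite !mxE; case: i => [[|[|]]] //= ?; case: j => [[|[|]]]. Qed.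

Definition elem12 (t : R) := mx22 1 t 0 1.
Definition elem21 (t : R) := mx22 1 0 t 1.
Definition conj21 (t : R) (M : 'M[R]_2) := elem21 t *m M *m elem21 (- t).

Lemma elem12D a b : elem12 a *m elem12 b = elem12 (a + b).
Proof. by rewrite mulmx22; congr mx22; ring. Qed.

Lemma elem21D a b : elem21 a *m elem21 b = elem21 (a + b).
Proof. by rewrite mulmx22; congr mx22; ring. Qed.

Lemma elem12_0 : elem12 0 = 1%:M. Proof. exact: mx22_1. Qed.
Lemma elem21_0 : elem21 0 = 1%:M. Proof. exact: mx22_1. Qed.

Lemma det_elem12 t : \det (elem12 t) = 1.
Proof. by rewrite det_mx22; ring. Qed.

Lemma det_elem21 t : \det (elem21 t) = 1.
Proof. by rewrite det_mx22; ring. Qed.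

Lemma conj21M t M N : conj21 t (M *m N) = conj21 t M *m conj21 t N.
Proof.
by rewrite /conj21 !mulmxA -[_ *m elem21 (- t) *m elem21 t]mulmxA elem21D addNr elem21_0 mulmx1.
Qed.

Lemma conj21_0 M : conj21 0 M = M.
Proof. by rewrite /conj21 oppr0 elem21_0 mul1mx mulmx1. Qed.

Lemma conj21_1 t : conj21 t 1%:M = 1%:M.
Proof. by rewrite /conj21 mulmx1 elem21D subrr elem21_0. Qed.

Lemma conj21_shift a b (U A : 'M[R]_2) :
  elem21 (- b) *m (conj21 b U *m A) = U *m (elem21 (a - b) *m (elem21 (- a) *m A)).
Proof.
rewrite /conj21 !mulmxA elem21D addNr elem21_0 mul1mx -!mulmxA [elem21 (a - b) *m _]mulmxA.
by rewrite elem21D addrAC subrr add0r.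
Qed.

Lemma det_conj21 t M : \det (conj21 t M) = \det M.
Proof. by rewrite /conj21 !det_mulmx !det_elem21 mul1r mulr1. Qed.

End Matrix22.

Section Matrix22Field.
Variable F : fieldType.
Hypothesis two_neq0 : (2 : F) != 0.

Lemma elem21_conj (t : F) :
  elem21 t = elem12 (- 2^-1) *m conj21 2 (elem12 (- (t / 4))) *m elem12 2^-1.
Proof.
have four_neq0 : (4 : F) != 0 by rewrite (_ : 4 = 2 * 2) ?mulf_neq0 //; ring.
rewrite /conj21 /elem12 /elem21 !mulmx22; congr mx22; by field; rewrite ?four_neq0 ?two_neq0.
Qed.

Lemma SL2_decomp (M : 'M[F]_2) : M 1 0 != 0 -> \det M = 1 ->
  M = elem12 ((M 0 0 - 1) / M 1 0) *m elem21 (M 1 0) *m elem12 ((M 1 1 - 1) / M 1 0).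
Proof.
move=> hc; rewrite [X in \det X]mx22E det_mx22 => hdet; rewrite {1}[M]mx22E.
rewrite /elem12 /elem21 !mulmx22; congr mx22; try by field.
have -> : M 0 1 = (M 0 0 * M 1 1 - 1) / M 1 0 by rewrite -hdet; field.
by field.
Qed.

End Matrix22Field.

Section Fractions.
Variable F : fieldType.
Implicit Types a b c d u w x y : F.

Lemma addf_mul_div c d u w : w != 0 -> c * (u / w) + d = (c * u + d * w) / w.
Proof. by move=> hw; field. Qed.

Lemma divf_div_common x y w : w != 0 -> (x / w) / (y / w) = x / y.
Proof. by move=> hw; rewrite invf_div mulrA divfK. Qed.

Lemma divf_mul_common a c u : u != 0 -> (a * u) / (c * u) = a / c.
Proof. by move=> hu; rewrite invfM mulrACA divff // mulr1. Qed.

End Fractions.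

Section Mobius.
Variable p : nat.
Implicit Types (M N : 'M['F_p]_2) (z : P1 p).

Lemma lft_comp (a b c d a' b' c' d' : 'F_p) z : a' * d' - b' * c' != 0 ->
  lft a b c d (lft a' b' c' d' z) =
  lft (a * a' + b * c') (a * b' + b * d') (c * a' + d * c') (c * b' + d * d') z.
Proof.
move=> hdet; case: z => [x|] /=.
- have -> : (c * a' + d * c') * x + (c * b' + d * d') = c * (a' * x + b') + d * (c' * x + d') by ring.
  have -> : (a * a' + b * c') * x + (a * b' + b * d') = a * (a' * x + b') + b * (c' * x + d') by ring.
  have [w0|w0] := eqVneq (c' * x + d') 0.
  + have hu : a' * x + b' != 0.
      apply: contraNneq hdet => hu; apply/eqP.
      have -> : b' = - (a' * x) by rewrite -[b'](addKr (a' * x)) hu addr0.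
      have -> : d' = - (c' * x) by rewrite -[d'](addKr (c' * x)) w0 addr0.
      ring.
    rewrite /= w0 !mulr0 !addr0 mulf_eq0 (negbTE hu) orbF.
    by case: ifP => [//|hc]; rewrite divf_mul_common.
  + rewrite /= !addf_mul_div // mulf_eq0 invr_eq0 (negbTE w0) orbF.
    by case: ifP => [//|_]; rewrite divf_div_common.
- have [c0|c0] := eqVneq c' 0.
  + have ha : a' != 0 by apply: contraNneq hdet => ->; rewrite c0; apply/eqP; ring.
    rewrite /= c0 !mulr0 !addr0 mulf_eq0 (negbTE ha) orbF.
    by case: ifP => [//|hc]; rewrite divf_mul_common.
  + rewrite /= !addf_mul_div //.
    rewrite mulf_eq0 invr_eq0 (negbTE c0) orbF.
    by case: ifP => [//|_]; rewrite divf_div_common.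
Qed.

Definition mobius M : P1 p -> P1 p := lft (M 0 0) (M 0 1) (M 1 0) (M 1 1).

Lemma mobiusM M N z : \det N != 0 -> mobius M (mobius N z) = mobius (M *m N) z.
Proof.
rewrite [N]mx22E det_mx22 [M]mx22E mulmx22 /mobius !mxE /=; exact: lft_comp.
Qed.

Lemma mobius1 z : mobius 1%:M z = z.
Proof.
rewrite -mx22_1 /mobius !mxE /=; case: z => [x|] /=; rewrite ?eqxx //.
by rewrite mul1r mul0r addr0 add0r divr1.
Qed.

Lemma mobiusK M : \det M != 0 -> cancel (mobius M) (mobius (invmx M)).
Proof. by move=> hM z; rewrite mobiusM // mulVmx ?mobius1 // unitmxE unitfE. Qed.

Definition mkperm (T : finType) (f : T -> T) : {perm T} :=
  if injectiveP f is ReflectT f_inj then perm f_inj else 1%g.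

Lemma mkpermE (T : finType) (f : T -> T) : injective f -> mkperm f =1 f.
Proof. by rewrite /mkperm; case: injectiveP => // f_inj _ x; rewrite permE. Qed.

Definition mobius_perm M := mkperm (mobius M).

Lemma mobius_permE M : \det M != 0 -> mobius_perm M =1 mobius M.
Proof. by move=> hM; apply/mkpermE/(can_inj (mobiusK hM)). Qed.

Lemma mobius_permM M N : \det M != 0 -> \det N != 0 ->
  (mobius_perm N * mobius_perm M)%g = mobius_perm (M *m N).
Proof.
move=> hM hN; apply/permP => z.
by rewrite permM !mobius_permE ?mobiusM // det_mulmx mulf_neq0.
Qed.

Lemma mobius_perm1 : mobius_perm 1%:M = 1%g.
Proof. by apply/permP => z; rewrite mobius_permE ?det1 ?oner_eq0 // mobius1 perm1. Qed.

Lemma mobius_perm_Hp M : \det M = 1 -> mobius_perm M \in Hp p.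
Proof.
move=> hM; rewrite inE; apply/existsP; exists (M 0 0); apply/existsP; exists (M 0 1).
apply/existsP; exists (M 1 0); apply/existsP; exists (M 1 1).
rewrite -det_mx22 -mx22E hM eqxx /=; apply/forallP => z.
by rewrite mobius_permE ?hM ?oner_eq0.
Qed.

Lemma HpP s : s \in Hp p -> exists2 M, \det M = 1 & s = mobius_perm M.
Proof.
rewrite inE => /existsP [a /existsP [b /existsP [c /existsP [d /andP [/eqP hdet /forallP hs]]]]].
have hM : \det (mx22 a b c d) = 1 by rewrite det_mx22.
exists (mx22 a b c d) => //; apply/permP => z.
by rewrite mobius_permE ?hM ?oner_eq0 // /mobius !mxE /=; apply/eqP/hs.
Qed.

Lemma Hp_mul s t : s \in Hp p -> t \in Hp p -> (s * t)%g \in Hp p.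
Proof.
move=> /HpP [M hM ->] /HpP [N hN ->].
by rewrite mobius_permM ?hM ?hN ?oner_eq0 // mobius_perm_Hp // det_mulmx hM hN mulr1.
Qed.

Lemma mobius_two_trans (i j : P1 p) : i != j ->
  exists M, [/\ \det M = 1, mobius M (Some 0) = i & mobius M None = j].
Proof.
case: i => [u|]; case: j => [v|] // hij.
- have hvu : v - u != 0 by rewrite subr_eq0 eq_sym; apply: contra hij => /eqP ->.
  exists (mx22 (v / (v - u)) u (v - u)^-1 1); rewrite det_mx22 /mobius !mxE /=.
  rewrite !mulr0 !add0r oner_eq0 divr1 invr_eq0 (negbTE hvu) invrK divfK //.
  by rewrite mulr1 -mulrBl divff.
- exists (mx22 1 u 0 1); rewrite det_mx22 /mobius !mxE /=.
  by rewrite !mulr0 !add0r mulr1 subr0 divr1.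
- exists (mx22 v (-1) 1 0); rewrite det_mx22 /mobius !mxE /=.
  by rewrite mulr0 mulr1 sub0r opprK divr1.
Qed.

End Mobius.

Section Wreath.
Variable p : nat.
Implicit Types (x y : {ffun P1 p -> 'F_3}) (s : {perm P1 p}) (M N : 'M['F_p]_2).

Definition wperm_fun x s (ic : P1 p * 'F_3) := (s ic.1, ic.2 + x (s ic.1)).

Lemma wperm_fun_inj x s : injective (wperm_fun x s).
Proof.
move=> [i c] [j d] E; have /= /perm_inj eij := congr1 fst E.
by have /= := congr1 snd E; rewrite eij => /addIr ->.
Qed.

Definition wperm x s : {perm P1 p * 'F_3} := perm (@wperm_fun_inj x s).

Lemma wpermE x s ic : wperm x s ic = (s ic.1, ic.2 + x (s ic.1)).
Proof. by rewrite permE. Qed.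

Lemma wpermM x1 s1 x2 s2 :
  (wperm x1 s1 * wperm x2 s2)%g = wperm [ffun j => x2 j + x1 ((s2^-1)%g j)] (s1 * s2).
Proof.
apply/permP => -[i c]; rewrite permM !wpermE /= permM ffunE permK.
by rewrite addrAC addrA.
Qed.

Lemma wperm01 : wperm 0 1 = 1%g.
Proof. by apply/permP => -[i c]; rewrite wpermE !perm1 /= ffunE addr0. Qed.

Lemma wperm0V s : (wperm 0 s)^-1%g = wperm 0 s^-1.
Proof.
apply/eqP; rewrite eq_invg_mul wpermM mulgV -wperm01.
by apply/eqP; congr wperm; apply/ffunP => j; rewrite !ffunE addr0.
Qed.

Lemma Hp1 : (1 : {perm P1 p})%g \in Hp p.
Proof. by rewrite -mobius_perm1 mobius_perm_Hp ?det1. Qed.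

Lemma wperm_Gp x s : s \in Hp p -> \sum_i x i = 0 -> wperm x s \in Gp p.
Proof.
move=> hs hx; rewrite inE; apply/existsP; exists s; rewrite hs /=.
by apply/existsP; exists x; rewrite hx eqxx /=; apply/forallP => ic; rewrite wpermE.
Qed.

Lemma GpP g : g \in Gp p ->
  exists x s, [/\ s \in Hp p, \sum_i x i = 0 & g = wperm x s].
Proof.
rewrite inE => /existsP [s /andP [hs /existsP [x /andP [/eqP hx /forallP hg]]]].
by exists x, s; split => //; apply/permP => ic; rewrite wpermE; apply/eqP/hg.
Qed.

Lemma Gp_group_set : group_set (Gp p).
Proof.
apply/group_setP; split.
  by rewrite -wperm01 wperm_Gp ?Hp1 // big1 // => i; rewrite ffunE.
move=> g h /GpP [x1 [s1 [hs1 hx1 ->]]] /GpP [x2 [s2 [hs2 hx2 ->]]].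
rewrite wpermM wperm_Gp ?Hp_mul //.
rewrite (eq_bigr (fun j => x2 j + x1 ((s2^-1)%g j))) => [|j _]; last by rewrite ffunE.
rewrite big_split /= hx2 add0r (reindex_inj (@perm_inj _ s2)) /=.
by rewrite (eq_bigr x1) // => j _; rewrite permK.
Qed.

Canonical Gp_group := group Gp_group_set.

Definition transl x := wperm x 1.
Definition linperm M := wperm 0 (mobius_perm M).

Lemma translD x y : (transl x * transl y)%g = transl (x + y).
Proof.
rewrite /transl wpermM mulg1; congr wperm.
by apply/ffunP => j; rewrite !ffunE invg1 perm1 addrC.
Qed.

Lemma transl0 : transl 0 = 1%g.
Proof. exact: wperm01. Qed.

Lemma transl_Gp x : \sum_i x i = 0 -> transl x \in Gp p.
Proof. exact/wperm_Gp/Hp1. Qed.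

Lemma wperm_split x s : wperm x s = (wperm 0 s * transl x)%g.
Proof. by rewrite /transl wpermM mulg1; congr wperm; apply/ffunP => j; rewrite !ffunE addr0. Qed.

Lemma transl_conj x s : (transl x ^ wperm 0 s)%g = transl [ffun j => x ((s^-1)%g j)].
Proof.
rewrite conjgE wperm0V /transl !wpermM mul1g mulVg.
by congr wperm; apply/ffunP => j; rewrite !ffunE !addr0 add0r.
Qed.

Lemma linpermM M N : \det M != 0 -> \det N != 0 ->
  (linperm N * linperm M)%g = linperm (M *m N).
Proof.
move=> hM hN; rewrite /linperm wpermM mobius_permM //; congr wperm.
by apply/ffunP => j; rewrite !ffunE addr0.
Qed.

Lemma linperm1 : linperm 1%:M = 1%g.
Proof. by rewrite /linperm mobius_perm1 wperm01. Qed.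

Lemma linperm_Gp M : \det M = 1 -> linperm M \in Gp p.
Proof. by move=> hM; rewrite wperm_Gp ?mobius_perm_Hp // big1 // => i; rewrite ffunE. Qed.

End Wreath.

Section SL2Generation.
Variable p : nat.
Hypothesis two_neq0 : (2 : 'F_p) != 0.
Variable P : pred 'M['F_p]_2.
Hypothesis P_1 : P 1%:M.
Hypothesis P_mul : forall M N, \det M = 1 -> \det N = 1 -> P M -> P N -> P (M *m N).
Hypothesis P_elem12_2 : P (elem12 2).
Hypothesis P_conj21_elem12_2 : P (conj21 2 (elem12 2)).

Lemma P_one_param (u : 'F_p -> 'M['F_p]_2) :
  u 0 = 1%:M -> (forall a b : 'F_p, u (a + b) = u a *m u b) -> (forall a, \det (u a) = 1) ->
  P (u 2) -> forall t, P (u t).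
Proof.
move=> u0 uD det_u Pu2 t.
have Pu2n n : P (u (2 * n%:R)).
  elim: n => [|n IH]; first by rewrite mulr0 u0.
  by rewrite -[n.+1]addn1 natrD mulrDr mulr1 uD P_mul.
by rewrite -[t](divfK two_neq0) mulrC -[t / 2]natr_Zp.
Qed.

Lemma P_elem12 (t : 'F_p) : P (elem12 t).
Proof.
apply: P_one_param => //; [exact: elem12_0 | by move=> a b; rewrite elem12D | exact: det_elem12].
Qed.

Lemma P_conj21_elem12 (t : 'F_p) : P (conj21 2 (elem12 t)).
Proof.
apply: (P_one_param (u := fun t => conj21 2 (elem12 t))) => //.
- by rewrite elem12_0 conj21_1.
- by move=> a b; rewrite -conj21M elem12D.
- by move=> a; rewrite det_conj21 det_elem12.
Qed.

Lemma P_elem21 (t : 'F_p) : P (elem21 t).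
Proof.
rewrite (elem21_conj two_neq0).
apply: P_mul; rewrite ?det_mulmx ?det_elem12 ?det_elem21 ?mul1r ?mulr1 ?P_elem12 //.
by apply: P_mul; rewrite ?det_conj21 ?det_elem12 ?P_elem12 ?P_conj21_elem12.
Qed.

Lemma P_SL2 M : \det M = 1 -> P M.
Proof.
have P_lower_neq0 (N : 'M['F_p]_2) : N 1 0 != 0 -> \det N = 1 -> P N.
  move=> hc hN; rewrite (SL2_decomp hc hN).
  apply: P_mul; rewrite ?det_mulmx ?det_elem21 ?det_elem12 ?mulr1 ?P_elem12 //.
  by apply: P_mul; rewrite ?det_elem21 ?det_elem12 ?P_elem12 ?P_elem21.
move=> hM; have [c0|c0] := eqVneq (M 1 0) 0; last exact: P_lower_neq0.
have -> : M = elem21 (-1) *m (elem21 1 *m M) by rewrite mulmxA elem21D addNr elem21_0 mul1mx.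
have hdet : \det (elem21 1 *m M) = 1 by rewrite det_mulmx det_elem21 mul1r.
rewrite P_mul ?det_elem21 ?P_elem21 // P_lower_neq0 //.
move: hM; rewrite [X in \det X]mx22E det_mx22 c0 mulr0 subr0 => hM.
rewrite /elem21 [X in _ *m X]mx22E mulmx22 !mxE /= c0 mul1r mulr0 addr0.
by apply/eqP => h0; move: hM; rewrite h0 mul0r => /eqP; rewrite eq_sym oner_eq0.
Qed.

End SL2Generation.

Lemma map_mx22 (R S : comNzRingType) (f : {rmorphism R -> S}) a b c d :
  map_mx f (mx22 a b c d) = mx22 (f a) (f b) (f c) (f d).
Proof. by apply/matrixP => i j; rewrite !mxE; case: ifP; case: ifP. Qed.

Section Words.
Variables (R : comNzRingType) (k : nat).

Definition letter_mx (x : letter k) : 'M[R]_2 :=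
  conj21 (2 * x.1%:R) (elem12 (if x.2 then -2 else 2)).

Definition word_mx (w : seq (letter k)) : 'M[R]_2 :=
  foldr (fun x M => M *m letter_mx x) 1%:M w.

Lemma word_mx_cons x w : word_mx (x :: w) = word_mx w *m letter_mx x.
Proof. by []. Qed.

Lemma det_letter_mx x : \det (letter_mx x) = 1.
Proof. by rewrite det_conj21 det_elem12. Qed.

Lemma letter_mxV (j : 'I_k) : letter_mx (j, true) *m letter_mx (j, false) = 1%:M.
Proof. by rewrite -conj21M elem12D addNr elem12_0 conj21_1. Qed.

End Words.

Lemma map_word_mx (R S : comNzRingType) (f : {rmorphism R -> S}) k (w : seq (letter k)) :
  map_mx f (word_mx R w) = word_mx S w.
Proof.
elim: w => [|x w IH]; first by rewrite map_scalar_mx rmorph1.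
rewrite !word_mx_cons map_mxM IH /letter_mx /conj21 /elem12 /elem21 !map_mxM !map_mx22.
by case: x.2; rewrite !rmorph0 !rmorph1 !rmorphN ?rmorphM !rmorph_nat.
Qed.

Section PingPong.
Variable k : nat.
Implicit Types (a b : int) (A : 'M[int]_2) (x y : letter k) (w : seq (letter k)).

Definition cone (e : bool) a b := (`|b| < `|a|) && (if e then a * b <= 0 else 0 <= a * b).
Definition ycone a b := `|a| < `|b|.

Lemma cone_shear e a b : ycone a b || cone e a b -> cone e (a + (if e then -2 else 2) * b) b.
Proof. by rewrite /ycone /cone; case: e => /orP [h|/andP [h1 h2]]; apply/andP; split; nia. Qed.

Lemma ycone_shear d a b : d != 0 -> `|b| < `|a| -> ycone a (2 * d * a + b).
Proof. by rewrite /ycone -normr_gt0 => hd h; nia. Qed.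

Definition cone_at x A :=
  let V := elem21 (- (2 * x.1%:R)) *m A in cone x.2 (V 0 1) (V 1 1).

Lemma cone_at_letter x y A :
  ~~ ((x.1 == y.1) && (x.2 != y.2)) -> cone_at x A -> cone_at y (letter_mx int y *m A).
Proof.
rewrite /cone_at /letter_mx (conj21_shift (2 * x.1%:R)) -mulrBr.
move: (elem21 _ *m A) => V hxy hV.
rewrite /elem12 /elem21 [V]mx22E !mulmx22 !mxE /= !mul1r !mul0r ?add0r ?addr0.
apply: cone_shear; have [exy|nxy] := eqVneq x.1 y.1.
- move: hxy; rewrite exy subrr mulr0 mul0r add0r eqxx /= negbK => /eqP <-.
  by rewrite hV orbT.
- apply/orP; left; apply: ycone_shear; last by case/andP: hV.
  by rewrite subr_eq0 eqr_nat; apply: contra nxy => /eqP /val_inj ->.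
Qed.

Lemma cone_at_word x w A :
  reduced (x :: w) -> cone_at x A -> cone_at (last x w) (word_mx int w *m A).
Proof.
elim: w x A => [|y w IH] x A /=; first by rewrite mul1mx.
move=> /andP [hxy hred] hA; rewrite -mulmxA.
exact: IH hred (cone_at_letter hxy hA).
Qed.

Lemma word_mx01_neq0 w : reduced w -> w != [::] -> word_mx int w 0 1 != 0.
Proof.
case: w => [|x w] // hred _.
have hx : cone_at x (letter_mx int x *m 1%:M).
  rewrite /cone_at /letter_mx (conj21_shift (2 * x.1%:R)) subrr.
  by rewrite /elem12 /elem21 -mx22_1 !mulmx22 !mxE /= /cone; case: x.2 => /=; lia.
have := cone_at_word hred hx; rewrite -mulmxA mulmx1 -word_mx_cons /cone_at.
move: (last x w) (word_mx int (x :: w)) => y W /andP [+ _]; apply: contraTneq.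
rewrite /elem21 [W]mx22E mulmx22 !mxE /= => ->.
by rewrite !mulr0 !mul0r !addr0 normr0 ltNge normr_ge0.
Qed.

End PingPong.

Section Representation.
Variables (p k : nat).
Implicit Types (x : {ffun P1 p -> 'F_3}) (i j : P1 p).

Definition delta i : {ffun P1 p -> 'F_3} := [ffun l => (l == i)%:R].
Definition ddelta i j := delta i - delta j.

Definition rho (l : 'I_k) : {perm P1 p * 'F_3} :=
  wperm (if l == 2 :> nat then ddelta (Some 0) None else 0)
        (mobius_perm (letter_mx 'F_p (l, false))).

Lemma sum_delta i : \sum_l delta i l = 1.
Proof.
rewrite (bigD1 i) //= ffunE eqxx big1 ?addr0 // => l hl.
by rewrite ffunE (negbTE hl).
Qed.

Lemma sum_ddelta i j : \sum_l ddelta i j l = 0.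
Proof.
rewrite (eq_bigr (fun l => delta i l - delta j l)) => [|l _]; last by rewrite !ffunE.
by rewrite sumrB !sum_delta subrr.
Qed.

Lemma ddelta_perm (s : {perm P1 p}) i j :
  [ffun l => ddelta i j ((s^-1)%g l)] = ddelta (s i) (s j).
Proof. by apply/ffunP => l; rewrite !ffunE -!(canF_eq (permKV s)). Qed.

Lemma sum0_ddelta x : \sum_l x l = 0 -> x = \sum_l ddelta l None *+ x l.
Proof.
move=> hx; apply/ffunP => j; rewrite sum_ffunE.
rewrite (eq_bigr (fun l : P1 p => (j == l)%:R * x l - (j == None)%:R * x l)) => [|l _]; last first.
  by rewrite ffunMnE !ffunE -[_ *+ (x l : nat)]mulr_natr natr_Zp mulrBl.
rewrite sumrB -mulr_sumr hx mulr0 subr0 (bigD1 j) //= eqxx mul1r big1 ?addr0 // => l hl.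
by rewrite eq_sym (negbTE hl) mul0r.
Qed.

Lemma rho_Gp l : rho l \in Gp p.
Proof.
apply: wperm_Gp; first exact/mobius_perm_Hp/det_letter_mx.
by case: ifP => _; rewrite ?sum_ddelta // big1 // => i _; rewrite ffunE.
Qed.

Lemma rho_fst l ic : (rho l ic).1 = mobius (letter_mx 'F_p (l, false)) ic.1.
Proof. by rewrite wpermE mobius_permE // det_letter_mx oner_eq0. Qed.

End Representation.

Section Generation.
Variables (p k : nat).
Hypothesis two_neq0 : (2 : 'F_p) != 0.
Hypothesis k_ge3 : (3 <= k)%N.

Let K := <<[set rho p l | l : 'I_k]>>%G.

Lemma rho_K (l : 'I_k) : rho p l \in K.
Proof. exact/mem_gen/imset_f. Qed.

Let l0 : 'I_k := Ordinal (leq_trans (isT : 0 < 3)%N k_ge3).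
Let l1 : 'I_k := Ordinal (leq_trans (isT : 1 < 3)%N k_ge3).
Let l2 : 'I_k := Ordinal (leq_trans (isT : 2 < 3)%N k_ge3).

Lemma linperm_K (M : 'M['F_p]_2) : \det M = 1 -> linperm M \in K.
Proof.
apply: (@P_SL2 p two_neq0 [pred M | linperm M \in K]); rewrite /= ?linperm1 ?group1 //.
- move=> A B hA hB KA KB; rewrite -linpermM ?hA ?hB ?oner_eq0 //.
  exact: groupM.
- by have := rho_K l0; rewrite /rho /letter_mx /= mulr0 conj21_0.
- by have := rho_K l1; rewrite /rho /letter_mx /= mulr1.
Qed.

Lemma transl_ddelta0_K : transl (ddelta (Some 0) None) \in K.
Proof.
have := rho_K l2; rewrite /rho /= wperm_split => hK.
rewrite -(mulKg (linperm (letter_mx 'F_p (l2, false))) (transl _)).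
by rewrite groupM ?groupV ?linperm_K ?det_letter_mx.
Qed.

Lemma transl_ddelta_K (i j : P1 p) : transl (ddelta i j) \in K.
Proof.
have [->|hij] := eqVneq i j; first by rewrite /ddelta subrr transl0 group1.
have [M [hM <- <-]] := mobius_two_trans hij.
rewrite -!mobius_permE ?hM ?oner_eq0 // -ddelta_perm -transl_conj.
by rewrite groupJ ?transl_ddelta0_K ?linperm_K.
Qed.

Lemma transl_K (x : {ffun P1 p -> 'F_3}) : \sum_l x l = 0 -> transl x \in K.
Proof.
move=> /sum0_ddelta ->; apply: (big_ind (fun v => transl v \in K)).
- by rewrite transl0 group1.
- by move=> a b Ka Kb; rewrite -translD groupM.
- move=> i _; elim: (x i : nat) => [|n IH]; first by rewrite mulr0n transl0 group1.
  by rewrite mulrS -translD groupM ?transl_ddelta_K.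
Qed.

Lemma rho_generates : <<[set rho p l | l : 'I_k]>>%g = Gp p.
Proof.
apply/eqP; rewrite eqEsubset gen_subG; apply/andP; split.
  by apply/subsetP => g /imsetP [l _ ->]; exact: rho_Gp.
apply/subsetP => g /GpP [x [s [hs hx ->]]]; have [M hM ->] := HpP hs.
by rewrite wperm_split groupM ?linperm_K ?transl_K.
Qed.

End Generation.

Lemma sqrtC_nat_le (m : nat) : sqrtC (m%:R : algC) <= m.+1%:R.
Proof.
rewrite -[X in _ <= X]sqrCK ?ler0n // ler_sqrtC ?qualifE /= ?ler0n ?exprn_ge0 //.
by rewrite -natrX ler_nat; nia.
Qed.

Lemma card_uniform_fibres (T Y : finType) (A : {set T}) (f : T -> Y) (n : nat) (B : {set Y}) :
  (forall y, #|[set x in A | f x == y]| = n) -> #|[set x in A | f x \in B]| = (#|B| * n)%N.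
Proof.
move=> hf; rewrite -sum1_card (partition_big f (mem B)) => [|x]; last by rewrite inE => /andP [].
rewrite -sum_nat_const; apply: eq_bigr => y yB; rewrite -(hf y) -sum1_card.
by apply: eq_bigl => x; rewrite !inE -andbA; case: eqP => [->|_]; rewrite ?andbF // (_ : y \in B).
Qed.

Definition Tset p : {set {perm P1 p * 'F_3}} := [set g in Gp p | (g (None, 0)).2 == 1].

Section Counting.
Variable p : nat.
Hypothesis p_prime : prime p.

Let x0 : P1 p * 'F_3 := (None, 0).
Let n := #|('C_(Gp p)[x0 | 'P])%g|.

Lemma Gp_transitive y : exists2 g, g \in Gp p & g x0 = y.
Proof.
case: y => i c; have [o ho] : exists o : P1 p, o != i by case: i => [?|]; [exists None | exists (Some 0)].
have [M [hM _ hi]] := mobius_two_trans ho.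
exists (linperm M * transl (ddelta i o *+ c))%g.
  rewrite groupM ?linperm_Gp ?transl_Gp // (eq_bigr _ (fun l _ => ffunMnE _ _ l)).
  by rewrite sumrMnl sum_ddelta mul0rn.
rewrite permM /linperm wpermE mobius_permE ?hM ?oner_eq0 // hi ffunE add0r /transl wpermE.
by rewrite /= perm1 ffunMnE /ddelta !ffunE eqxx eq_sym (negbTE ho) subr0 natr_Zp add0r.
Qed.

Lemma card_Gp_fibre y : #|[set g in Gp p | g x0 == y]| = n.
Proof.
have [a Ga <-] := Gp_transitive y.
have -> : [set g in Gp p | g x0 == a x0] = amove 'P (Gp p) x0 ('P%act x0 a).
  by apply/setP => g; rewrite !inE.
by rewrite amove_act ?subsetT // card_rcoset.
Qed.

Lemma card_Gp : #|Gp p| = (3 * p.+1 * n)%N.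
Proof.
have -> : Gp p = [set g in Gp p | g x0 \in [set: P1 p * 'F_3]].
  by apply/setP => g; rewrite !inE andbT.
by rewrite (card_uniform_fibres _ card_Gp_fibre) cardsT card_prod card_option !card_Fp // (mulnC p.+1).
Qed.

Lemma card_Tset : #|Tset p| = (p.+1 * n)%N.
Proof.
have -> : Tset p = [set g in Gp p | g x0 \in setX [set: P1 p] [set 1]].
  by apply/setP => g; rewrite !inE.
by rewrite (card_uniform_fibres _ card_Gp_fibre) cardsX cardsT cards1 card_option card_Fp // muln1.
Qed.

Lemma mem_Tset z : (z \in Tset p) = (z \in Gp p) && ((z x0).2 == 1).
Proof. by rewrite /Tset in_set. Qed.

Lemma mem_Tset_rcoset y s z : wperm y s \in Gp p ->
  (z \in (Tset p :* wperm y s)%g) = (z \in Gp p) && ((z x0).2 - y (z x0).1 == 1).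
Proof.
move=> hg; rewrite mem_rcoset mem_Tset groupMr ?groupV //; congr (_ && (_ == 1)).
have -> : z x0 = wperm y s ((z * (wperm y s)^-1)%g x0) by rewrite -permM mulgKV.
by rewrite wpermE /= addrK.
Qed.

Lemma symdiff_Tset_sub y s : wperm y s \in Gp p ->
  symdiff (Tset p :* wperm y s)%g (Tset p) \subset [set g in Gp p | y (g x0).1 != 0].
Proof.
move=> hg; apply/subsetP => z; rewrite in_setU !in_setD mem_Tset_rcoset // mem_Tset => hz.
rewrite in_set; move: hz; case: (z \in Gp p); rewrite /= ?andbF // => hz.
by apply: contraTneq hz => ->; rewrite subr0 andNb.
Qed.

Lemma card_symdiff_rho k (l : 'I_k) :
  (#|symdiff (Tset p :* rho p l)%g (Tset p)| <= 6 * n)%N.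
Proof.
apply: leq_trans (subset_leq_card (symdiff_Tset_sub (rho_Gp p l))) _.
set y := (if _ then _ else _).
have -> : [set g in Gp p | y (g x0).1 != 0] = [set g in Gp p | g x0 \in [set u | y u.1 != 0]].
  by apply/setP => g; rewrite !inE.
rewrite (card_uniform_fibres _ card_Gp_fibre) leq_mul2r; apply/orP; right.
apply: (@leq_trans #|setX [set Some 0; None] [set: 'F_3]|).
  apply/subset_leq_card/subsetP => -[i c]; rewrite !inE /y /=.
  case: ifP => _; last by rewrite ffunE eqxx.
  by rewrite /ddelta !ffunE; case: (i == Some 0); case: (i == None).
by rewrite cardsX cards2 cardsT card_Fp.
Qed.

Lemma Tset_ratio : (#|Tset p|%:R / #|Gp p|%:R : algC) = 3%:R^-1.
Proof.
have n_neq0 : (n%:R : algC) != 0 by rewrite pnatr_eq0 -lt0n cardG_gt0.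
by rewrite card_Tset card_Gp !natrM; field; rewrite n_neq0 nat1r pnatr_eq0.
Qed.

Lemma card_symdiff_rho_sqrt k (l : 'I_k) :
  (#|symdiff (Tset p :* rho p l)%g (Tset p)|%:R : algC) <= 2 / sqrtC p%:R * #|Gp p|%:R.
Proof.
apply: le_trans (_ : (6 * n)%:R <= _); first by rewrite ler_nat card_symdiff_rho.
have sqrt_gt0 : 0 < sqrtC (p%:R : algC) by rewrite sqrtC_gt0 ltr0n prime_gt0.
rewrite card_Gp (_ : 2 / _ * _ = (6 * n)%:R * (p.+1%:R / sqrtC p%:R)); last first.
  by rewrite !natrM; ring.
by rewrite ler_peMr ?ler0n // ler_pdivlMr // mul1r sqrtC_nat_le.
Qed.

End Counting.

Section Faithfulness.
Variables (p k : nat).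
Hypothesis p_prime : prime p.

Lemma rhoV_fst (l : 'I_k) ic : ((rho p l)^-1%g ic).1 = mobius (letter_mx 'F_p (l, true)) ic.1.
Proof.
rewrite -[in RHS](permKV (rho p l) ic) rho_fst mobiusM ?det_letter_mx ?oner_eq0 //.
by rewrite letter_mxV mobius1.
Qed.

Lemma eval_word_fst (w : seq (letter k)) ic :
  (eval_word (@rho p k) w ic).1 = mobius (word_mx 'F_p w) ic.1.
Proof.
rewrite /eval_word; elim: w ic => [|x w IH] ic; first by rewrite big_nil perm1 mobius1.
rewrite big_cons permM IH word_mx_cons -mobiusM ?det_letter_mx ?oner_eq0 //.
by case: x => l [] /=; rewrite ?rhoV_fst ?rho_fst.
Qed.

Lemma eval_word_neq1 (w : seq (letter k)) : reduced w -> w != [::] ->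
  (absz (word_mx int w 0%R 1%R) < p)%N -> eval_word (@rho p k) w != 1%g.
Proof.
move=> hred hne hlt; apply/eqP => h1.
have := eval_word_fst w (Some 0, 0); rewrite h1 perm1 /= -(map_word_mx intr) /mobius !mxE /=.
rewrite !mulr0 !add0r; case: ifP => // hd /Some_inj /esym /eqP.
rewrite mulf_eq0 invr_eq0 hd orbF -(dvdz_pcharf (pchar_Fp p_prime)) dvdzE /= => /dvdn_leq.
by rewrite absz_gt0 word_mx01_neq0 // leqNgt hlt => /(_ isT).
Qed.

End Faithfulness.

Lemma two_neq0_Fp p : prime p -> (p %% 3 = 1)%N -> (2 : 'F_p) != 0.
Proof.
move=> hp h3; rewrite -(dvdn_pcharf (pchar_Fp hp) 2) (dvdn_prime2 hp) //.
by apply/eqP => p2; move: h3; rewrite p2.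
Qed.

Unset Implicit Arguments.
Theorem lemma3p5 (k : nat) (hk : (3 <= k)%N) :
  exists C : algC, 0 < C /\
  exists p0 : nat,
  exists F : forall p : nat,
      ('I_k -> {perm (P1 p * 'F_3)}) * {set {perm (P1 p * 'F_3)}},
    (forall p : nat, (p0 <= p)%N -> prime p -> (p %% 3 = 1)%N ->
       let g := (F p).1 in let T := (F p).2 in
       [/\ <<[set g j | j : 'I_k]>>%g = Gp p,
           T \subset Gp p,
           1 / 243%:R <= (#|T|%:R / #|Gp p|%:R : algC),
           (#|T|%:R / #|Gp p|%:R : algC) <= 1 / 3%:R
         & forall j : 'I_k,
           (#|symdiff (T :* g j)%g T|%:R : algC)
             <= C / sqrtC (p%:R) * #|Gp p|%:R]) /\
    (forall w : seq (letter k), reduced w -> w != [::] ->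
       exists N : nat, forall p : nat, (N <= p)%N -> prime p -> (p %% 3 = 1)%N ->
         eval_word (F p).1 w != 1%g).
Proof.
exists 2; split; first by rewrite ltr0n.
exists 0%N, (fun p => (@rho p k, Tset p)); split.
- move=> p _ p_prime p_mod3 /=; split.
  + exact: rho_generates (two_neq0_Fp p_prime p_mod3) hk.
  + by apply/subsetP => g; rewrite mem_Tset => /andP [].
  + by rewrite Tset_ratio // !div1r lef_pV2 ?qualifE /= ?ltr0n // ler_nat.
  + by rewrite Tset_ratio // div1r.
  + exact: card_symdiff_rho_sqrt.
- move=> w hred hne; exists (absz (word_mx int w 0 1)).+1 => p hp p_prime _.
  exact: eval_word_neq1.
Qed.
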